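(* Let $\mathbb{F}$ be a field of characteristic $2$, and let $\mathcal{H}=(Q_0,Q_1,\beta)$ be an undirected graph encoded via the symmetric quadratic encoding. Let $\rho:T(\mathbb{F}^{Q_0})\to\mathbb{F}^{Q_0}$ be the linear map with $\rho(1)=0$ and $\rho(u_1\otimes u_2\otimes\cdots\otimes u_k)=u_1$ for $k\ge1$, $u_i\in Q_0$. Then $\mathrm{Ker}(\rho\circ\partial_\beta)=\mathrm{Ker}(B^{\mathrm{cl}})\subseteq\mathbb{F}^{Q_1}$.
   Context: $T(\mathbb{F}^{Q_0})=\bigoplus_{k\ge0}(\mathbb{F}^{Q_0})^{\otimes k}$ with $v\in Q_0$ identified with $\mathbf{1}_v$ and $1$ the unit of $T^0=\mathbb{F}$; the tensors $u_1\otimes\cdots\otimes u_k$ ($u_i\in Q_0$) and $1$ form a basis. Symmetric quadratic encoding: $Q_0$ vertex set, $Q_1$ edge set, $\psi:Q_1\to2^{Q_0}$ with $1\le|\psi(e)|\le2$, and $\beta(\mathbf{1}_e)=(A_e,B_e)$ with $(A_e,B_e)=(2(v\otimes v),1)$ if $\psi(e)=\{v\}$ (a loop) and $(u\otimes v+v\otimes u,1)$ if $\psi(e)=\{u,v\}$, $u\ne v$. $\partial_\beta:\mathbb{F}^{Q_1}\to T(\mathbb{F}^{Q_0})$ is linear with $\mathbf{1}_e\mapsto B_e-A_e$. The classical undirected incidence matrix $B^{\mathrm{cl}}\in\{0,1\}^{Q_0\times Q_1}$ has $B^{\mathrm{cl}}_{x,e}=1$ if $x\in\psi(e)$ and $e$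 is a non-loop edge, and $0$ otherwise, viewed as a linear map $\mathbb{F}^{Q_1}\to\mathbb{F}^{Q_0}$. *)

From HB Require Import structures.
From mathcomp Require Import all_boot all_order all_algebra.
From mathcomp Require Import finmap.
From mathcomp Require Import monalg.
Set Implicit Arguments. Unset Strict Implicit. Unset Printing Implicit Defensive.
Import GRing.Theory.
Local Open Scope ring_scope.

(* Tensor algebra T(F^{Q0}) as a vector space: the free F-module on words
   (seq Q0); the word [:: u1; ...; uk] stands for u1 ⊗ ... ⊗ uk, and the
   empty word [::] for the unit 1 of T^0 = F. *)
Notation tensorT F Q0 := {malg F[seq Q0]}.


Definition unitv (F : fieldType) (Q0 : finType) (v : Q0) : {ffun Q0 -> F^o} :=
  [ffun x => (x == v)%:R].

(* symmetric quadratic encoding: A is the family of A_e; B_e = 1 (empty word) *)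
Definition sym_quad_encoding (F : fieldType) (Q0 Q1 : finType)
  (psi : Q1 -> {set Q0}) (A : Q1 -> tensorT F Q0) : Prop :=
  forall e : Q1,
    (1 <= #|psi e| <= 2)%N /\
    (forall v : Q0, psi e = [set v] -> A e = 2%:R *: << [:: v; v] >>) /\
    (forall u v : Q0, u != v -> psi e = [set u; v] ->
        A e = << [:: u; v] >> + << [:: v; u] >>).

Definition boundary (F : fieldType) (Q0 Q1 : finType) (A : Q1 -> tensorT F Q0)
  (c : {ffun Q1 -> F}) : tensorT F Q0 :=
  \sum_(e : Q1) c e *: (<< [::] >> - A e).

Definition Bcl (F : fieldType) (Q0 Q1 : finType) (psi : Q1 -> {set Q0})
  (c : {ffun Q1 -> F}) : {ffun Q0 -> F^o} :=
  [ffun x => \sum_(e : Q1 | (x \in psi e) && (#|psi e| == 2)%N) c e].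

From HB Require Import structures.
From mathcomp Require Import all_boot all_order all_algebra.
From mathcomp Require Import finmap.
From mathcomp Require Import monalg.
Set Implicit Arguments. Unset Strict Implicit. Unset Printing Implicit Defensive.
Import GRing.Theory.
Local Open Scope ring_scope.

(* Since rho kills the unit and reads off the first letter of a word, it sends
   A_e = u⊗v + v⊗u (u <> v) to 1_u + 1_v, the column of B^cl at e, and a loop
   A_e = 2 (v⊗v) to 2·1_v = 0 in characteristic 2, again the (zero) column of
   B^cl at e.  Hence rho ∘ ∂_β = - B^cl and both maps have the same kernel. *)

Definition incidence_col (F : fieldType) (Q0 Q1 : finType)
  (psi : Q1 -> {set Q0}) (e : Q1) : {ffun Q0 -> F^o} :=
  [ffun x => ((x \in psi e) && (#|psi e| == 2)%N)%:R].
Arguments incidence_col {F Q0 Q1}.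

Lemma Bcl_incidence (F : fieldType) (Q0 Q1 : finType) (psi : Q1 -> {set Q0})
    (c : {ffun Q1 -> F}) :
  Bcl psi c = \sum_(e : Q1) c e *: incidence_col psi e.
Proof.
apply/ffunP => x; rewrite ffunE sum_ffunE big_mkcond /=.
apply: eq_bigr => e _; rewrite !ffunE.
by case: ifP => _; rewrite /GRing.scale /= ?mulr1 ?mulr0.
Qed.

Section RhoBoundary.

Variables (F : fieldType) (Q0 Q1 : finType).
Variables (psi : Q1 -> {set Q0}) (A : Q1 -> tensorT F Q0).
Variable rho : {linear tensorT F Q0 -> {ffun Q0 -> F^o}}.

Hypothesis char2 : 2 \in [pchar F].
Hypothesis encA : sym_quad_encoding psi A.
Hypothesis rho_unit : rho << [::] >> = 0.
Hypothesis rho_word : forall (u : Q0) (w : seq Q0), rho << u :: w >> = unitv F u.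

Lemma rho_edge (e : Q1) : rho (A e) = incidence_col psi e.
Proof.
have [card_psi [A_loop A_link]] := encA e.
have : (#|psi e| == 1)%N || (#|psi e| == 2)%N.
  by case: #|psi e| card_psi => [|[|[|]]].
case/orP => [/cards1P [v psi_v] | /cards2P [u [v [neq_uv psi_uv]]]].
  rewrite (A_loop v psi_v) linearZ /= (pcharf0 char2) scale0r.
  by apply/ffunP => x; rewrite !ffunE psi_v cards1 andbF.
rewrite (A_link u v neq_uv psi_uv) linearD /= !rho_word.
apply/ffunP => x; rewrite !ffunE psi_uv cards2 neq_uv eqxx andbT in_set2.
by case: (eqVneq x u) => [->|_] /=; rewrite ?(negbTE neq_uv) ?addr0 ?add0r.
Qed.

Lemma rho_boundary (c : {ffun Q1 -> F}) : rho (boundary A c) = - Bcl psi c.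
Proof.
rewrite Bcl_incidence /boundary raddf_sum -sumrN.
apply: eq_bigr => e _.
by rewrite [LHS]linearZ [in LHS]linearB /= rho_unit rho_edge sub0r scalerN.
Qed.

End RhoBoundary.

Theorem theorem5p7 (F : fieldType) (Q0 Q1 : finType)
  (psi : Q1 -> {set Q0}) (A : Q1 -> tensorT F Q0)
  (rho : {linear tensorT F Q0 -> {ffun Q0 -> F^o}}) :
  (2 \in [pchar F]) ->
  sym_quad_encoding psi A ->
  rho << [::] >> = 0 ->
  (forall (u : Q0) (w : seq Q0), rho << u :: w >> = unitv F u) ->
  forall c : {ffun Q1 -> F},
    rho (boundary A c) = 0 <-> Bcl psi c = 0.
Proof.
move=> char2 encA rho_unit rho_word c.
rewrite (rho_boundary char2 encA rho_unit rho_word).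
by split => [/eqP | ->]; rewrite ?oppr_eq0 ?oppr0 // => /eqP.
Qed.
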